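(* Let $K$ be the $2$-uniform tiling of the plane whose vertex types are $[3^3,4^2]$ and $[3^1,4^1,6^1,4^1]$. If $X$ is a map on the torus that is a quotient $X=K/\Gamma$ of $K$, then the vertices of $X$ form at most $6$ orbits under ${\rm Aut}(X)$.
   Context: A map is a polyhedral map: a cellular embedding of a connected graph in a closed surface such that the intersection of any two distinct faces is empty, a single vertex, or a single edge. For a vertex $u$, the faces containing $u$ form a cyclic sequence (the face-cycle at $u$); if this cyclic sequence consists of consecutive blocks of $n_1$ $p_1$-gons, then $n_2$ $p_2$-gons, ..., then $n_k$ $p_k$-gons, with cyclically consecutive $p_i$ distinct, then $u$ is said to have type $[p_1^{n_1},\dots,p_k^{n_k}]$ (defined up to cyclic shift and reversal). A $2$-uniform tiling is an edge-to-edge tiling of the Euclidean plane $\mathbb{R}^2$ by regular polygons whose symmetry group has exactly two orbits on the set of vertices; viewed as a map on the plane, its vertices have (at most) two types, listed as $[W;Z]$. (Up to isomorphism there are exactly $20$ such tilings; there is exactly one with the vertex types named in the claim.) For a map $K$ on the plane, a quotient of $K$ on the torus is a map $X$ on the torus together with a polyhedral covering map $\eta:K\to X$ with $X=K/\Gamma$, where $\Gamma\le {\rm Aut}(K)$ is a subgroup acting without fixed vertices, edges or faces and $K/\Gamma$ is homeomorphic to the torus. ${\rm Aut}(X)$ denotes the automorphism group of the map $X$, acting on its vertex set $V(X)$. *)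

From mathcomp Require Import all_boot all_algebra.
From Stdlib Require List.
Set Implicit Arguments. Unset Strict Implicit. Unset Printing Implicit Defensive.

(* Translation cells of the rosette lattice, in lattice coordinates w.r.t.
   a = (2+sqrt3, 0) and b = (2+sqrt3)(1/2, sqrt3/2). *)
Definition cell := (int * int)%type.
(* 12 vertices per cell: 0..5 = hexagon vertices h_k (angle 30+60k deg,
   type 3.4.6.4); 6..11 = outer square corners o_0^-,o_0^+,o_1^-,o_1^+,
   o_2^-,o_2^+ (type 3^3.4^2). *)
Definition V := (cell * 'I_12)%type.

Definition cadd (c d : cell) : cell := (c.1 + d.1, c.2 + d.2)%R.
Definition csub (c d : cell) : cell := (c.1 - d.1, c.2 - d.2)%R.
(* lattice vectors in the directions 0, 60, 120 degrees *)
Definition dir (j : nat) : cell :=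
  match j with 0 => (1%R, 0%R) | 1 => (0%R, 1%R) | _ => ((-1)%R, 1%R) end.

Definition vx (c : cell) (k : nat) : V := (c, inord k).
Definition hx (c : cell) (k : nat) : V := vx c (k %% 6).
(* outer corners o_j^- and o_j^+ of the square S_j on the hexagon edge
   h_{j-1} h_j (outer normal at angle 60j deg); for j >= 3 they are
   identified with corners of the neighbouring rosette. *)
Definition om (c : cell) (j : nat) : V :=
  let j := j %% 6 in
  if j < 3 then vx c (6 + 2 * j) else vx (csub c (dir (j - 3))) (7 + 2 * (j - 3)).
Definition op (c : cell) (j : nat) : V :=
  let j := j %% 6 in
  if j < 3 then vx c (7 + 2 * j) else vx (csub c (dir (j - 3))) (6 + 2 * (j - 3)).

(* The 15 faces owned by cell c, each as its counterclockwise boundary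
   cycle: 1 hexagon, 6 squares, 6 rosette triangles, 2 gap triangles. *)
Definition cell_faces (c : cell) : seq (seq V) :=
  [seq hx c k | k <- iota 0 6] ::
  [seq [:: hx c (j + 5); om c j; op c j; hx c j] | j <- iota 0 6] ++
  [seq [:: hx c j; op c j; om c j.+1] | j <- iota 0 6] ++
  [:: [:: op c 0; op (cadd c (dir 0)) 2; om c 1];
      [:: op c 1; om (cadd c (csub (dir 1) (dir 0))) 0; om c 2]].

Definition Kface (s : seq V) : Prop := exists c : cell, s \in cell_faces c.

Definition dih_eq (T : Type) (s t : seq T) : Prop :=
  exists k, t = rot k s \/ t = rot k (rev s).
Definition cyc_adj (T : Type) (s : seq T) (a b : T) : Prop :=
  exists k l, rot k s = a :: b :: l \/ rot k s = b :: a :: l.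

Definition Kedge (u v : V) : Prop := exists s, Kface s /\ cyc_adj s u v.

Definition face_pres (T : Type) (F : seq T -> Prop) (f : T -> T) : Prop :=
  forall s, F s -> exists t, F t /\ dih_eq (map f s) t.
Definition is_map_aut (T : Type) (F : seq T -> Prop) (f : T -> T) : Prop :=
  exists g : T -> T, cancel f g /\ cancel g f /\ face_pres F f /\ face_pres F g.

(* orientation-preserving on K: faces are sent to faces with the same
   (counterclockwise) orientation *)
Definition K_orient_pres (f : V -> V) : Prop :=
  forall s, Kface s -> exists t k, Kface t /\ map f s = rot k t.

Definition orb (G : (V -> V) -> Prop) (v w : V) : Prop := exists g, G g /\ g v = w.

Record torus_quotient_group (G : (V -> V) -> Prop) : Prop := {
  tq_aut   : forall g, G g -> is_map_aut Kface g;
  tq_id    : G id;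
  tq_comp  : forall f g, G f -> G g -> G (f \o g);
  tq_inv   : forall f, G f -> exists g, G g /\ cancel f g /\ cancel g f;
  tq_fixV  : forall g v, G g -> g v = v -> g =1 id;
  tq_fixE  : forall g u v, G g -> Kedge u v ->
               (g u = u /\ g v = v) \/ (g u = v /\ g v = u) -> g =1 id;
  tq_fixF  : forall g s, G g -> Kface s -> dih_eq (map g s) s -> g =1 id;
  (* K/Gamma is homeomorphic to the torus: compact (finitely many vertex
     orbits) and orientable (Gamma orientation preserving) *)
  tq_cocompact : exists L : seq V, forall v, exists w, w \in L /\ orb G w v;
  tq_orient : forall g, G g -> K_orient_pres g
}.

Definition VX (G : (V -> V) -> Prop) := { P : V -> Prop | exists v, P = orb G v }.
Definition cls (G : (V -> V) -> Prop) (v : V) : VX G :=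
  exist (fun P => exists w, P = orb G w) (orb G v) (ex_intro _ v erefl).
Definition Xface (G : (V -> V) -> Prop) (t : seq (VX G)) : Prop :=
  exists s, Kface s /\ t = map (@cls G) s.

Definition polyhedral (T : Type) (F : seq T -> Prop) : Prop :=
  (forall s, F s -> List.NoDup s) /\
  (forall s t, F s -> F t -> ~ dih_eq s t ->
     (forall x, ~ (List.In x s /\ List.In x t)) \/
     (exists a, forall x, List.In x s /\ List.In x t <-> x = a) \/
     (exists a b, a <> b /\ (forall x, List.In x s /\ List.In x t <-> x = a \/ x = b) /\
                  cyc_adj s a b /\ cyc_adj t a b)).

From mathcomp Require Import all_boot all_algebra zify.
From Stdlib Require List.
From Stdlib Require FunctionalExtensionality PropExtensionality ProofIrrelevance ClassicalEpsilon.
Set Implicit Arguments. Unset Strict Implicit. Unset Printing Implicit Defensive.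
Import GRing.Theory Num.Theory.

(* The faces of K are listed counterclockwise, so each directed edge lies on exactly
   one face.  Hence an orientation-preserving automorphism of K is determined by the
   image of one hexagon: it is a translation composed with a power rho^m of the
   rotation by 60 degrees about the centre of a hexagon.  For 0 < m < 6 such a map is
   conjugate, by a translation, to one that fixes a face or reverses an edge, which no
   element of Gamma may do; so Gamma consists of translations.  Therefore all
   translations of K and the half-turn rho^3 normalise Gamma and descend to
   automorphisms of X, and these merge the twelve vertices of a translation cell into
   six classes. *)

Lemma rot_lt_size (T : Type) (s : seq T) k :
  0 < size s -> exists2 k', k' < size s & rot k s = rot k' s.
Proof.
move=> s_gt0; have [k_lt | k_ge] := ltnP k (size s); first by exists k.
by exists 0 => //; rewrite rot_oversize // rot0.
Qed.

Lemma rot_rot_ex (T : Type) (s : seq T) k k' : exists n, rot k (rot k' s) = rot n s.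
Proof.
have [k'_le | k'_gt] := leqP k' (size s); last first.
  by exists k; rewrite (@rot_oversize _ k') // ltnW.
have [k_le | k_gt] := leqP k (size s); first by eexists; rewrite rot_add_mod.
by exists k'; rewrite rot_oversize // size_rot ltnW.
Qed.

Lemma dih_eq_map (T U : Type) (h : T -> U) s t : dih_eq s t -> dih_eq (map h s) (map h t).
Proof. by move=> [k [->|->]]; exists k; [left | right]; rewrite map_rot ?map_rev. Qed.

Lemma In_map_mem (T : eqType) (U : Type) (f : T -> U) x s : x \in s -> List.In (f x) (map f s).
Proof. by elim: s => //= y s IH; rewrite inE => /orP [/eqP ->|/IH]; [left | right]. Qed.

Lemma divz_spec (x d : int) : (0 < d)%R ->
  exists q r : int, [/\ x = q * d + r, 0 <= r & r < d]%R.
Proof.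
move=> d_gt0; exists (x %/ d)%Z, (x %% d)%Z.
by split; [exact: divz_eq | exact/modz_ge0/lt0r_neq0 | exact: ltz_pmod].
Qed.

(* [inord] with a transparent proof of the bound: this lets [vm_compute]
   decide equalities between explicitly named vertices. *)
Definition ordc (k : nat) : 'I_12 :=
  (if k < 12 as b return (k < 12) = b -> 'I_12 then fun H => Ordinal H else fun _ => ord0)
  (erefl (k < 12)).

Lemma ordcE k : ordc k = inord k.
Proof.
apply: val_inj; rewrite /ordc; move: (erefl (k < 12)).
case: {2 3}(k < 12) => Hk /=; first by rewrite inordK.
by rewrite /inord /insubd insubF.
Qed.

Definition vxc (c : cell) (k : nat) : V := (c, ordc k).

Lemma vx_vxc : vx = vxc.
Proof.
apply: FunctionalExtensionality.functional_extensionality => c.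
by apply: FunctionalExtensionality.functional_extensionality => k; rewrite /vxc ordcE.
Qed.

Lemma vxc_val (c : cell) (i : 'I_12) : vxc c i = (c, i).
Proof. by rewrite /vxc ordcE inord_val. Qed.

(** * Translations and faces of K *)

Lemma cellD (a b : cell) : (a + b)%R = (a.1 + b.1, a.2 + b.2)%R.
Proof. by []. Qed.

Lemma cellN (a : cell) : (- a)%R = (- a.1, - a.2)%R.
Proof. by []. Qed.

Lemma caddE (a b : cell) : cadd a b = (a + b)%R.
Proof. by []. Qed.

Lemma csubE (a b : cell) : csub a b = (a - b)%R.
Proof. by []. Qed.

Definition tr (d : cell) (v : V) : V := (v.1 + d, v.2)%R.

Lemma trD a b v : tr a (tr b v) = tr (b + a)%R v.
Proof. by rewrite /tr addrA. Qed.

Lemma tr0 v : tr 0%R v = v.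
Proof. by case: v => c i; rewrite /tr addr0. Qed.

Lemma trC a b v : tr a (tr b v) = tr b (tr a v).
Proof. by rewrite !trD addrC. Qed.

Lemma trK d : cancel (tr d) (tr (- d)%R).
Proof. by move=> v; rewrite trD subrr tr0. Qed.

Lemma trNK d : cancel (tr (- d)%R) (tr d).
Proof. by move=> v; rewrite trD addNr tr0. Qed.

Lemma tr_inj d : injective (tr d).
Proof. exact: can_inj (trK d). Qed.

Lemma tr_om d c j : tr d (om c j) = om (c + d)%R j.
Proof. by rewrite /om; case: ifP => _ //; rewrite /tr /vx /= !csubE addrAC. Qed.

Lemma tr_op d c j : tr d (op c j) = op (c + d)%R j.
Proof. by rewrite /op; case: ifP => _ //; rewrite /tr /vx /= !csubE addrAC. Qed.

Lemma cell_faces_tr d c : map (map (tr d)) (cell_faces c) = cell_faces (c + d)%R.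
Proof.
rewrite /cell_faces map_cons !map_cat -!map_comp /=.
congr [:: _, _ & _]; try by apply: eq_map => j /=; rewrite ?tr_om ?tr_op.
by rewrite !tr_om !tr_op !caddE !(addrAC c _ d).
Qed.

Definition base_faces : seq (seq V) := cell_faces 0%R.

Lemma cell_facesE c : cell_faces c = map (map (tr c)) base_faces.
Proof. by rewrite cell_faces_tr add0r. Qed.

Lemma KfaceE s : Kface s <-> exists c s0, s0 \in base_faces /\ s = map (tr c) s0.
Proof.
split; first by case=> c; rewrite cell_facesE => /mapP [s0 Hs0 ->]; exists c, s0.
by case=> c [s0 [Hs0 ->]]; exists c; rewrite cell_facesE map_f.
Qed.

Lemma Kface_tr d s : Kface s -> Kface (map (tr d) s).
Proof.
move/KfaceE=> [c [s0 [Hs0 ->]]]; apply/KfaceE; exists (c + d)%R, s0; split => //.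
by rewrite -map_comp; apply: eq_map => v; rewrite /= trD.
Qed.

Lemma Kface_base s : s \in base_faces -> Kface s.
Proof. by exists 0%R. Qed.

(* Two base faces sharing a directed edge coincide, once the second is translated so
   that its first vertex lies in the same cell as the first vertex of the first. *)
Definition base_dedge_uniq : bool :=
  all (fun s1 => all (fun s2 => all (fun a => all (fun b =>
    let r1 := rot a s1 in let r2 := rot b s2 in
    let r2' := map (tr ((head (vxc 0 0) r1).1 - (head (vxc 0 0) r2).1)%R) r2 in
    (take 2 r1 == take 2 r2') ==> (r1 == r2'))
  (iota 0 (size s2))) (iota 0 (size s1))) base_faces) base_faces.

Lemma base_dedge_uniqT : base_dedge_uniq.
Proof. by rewrite /base_dedge_uniq /base_faces /cell_faces /hx /om /op vx_vxc; vm_compute. Qed.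

Lemma base_faces_size : all (fun s => 2 < size s) base_faces.
Proof. by rewrite /base_faces /cell_faces /hx /om /op vx_vxc; vm_compute. Qed.

Lemma Kface_dedge_uniq t1 t2 a b x y l1 l2 : Kface t1 -> Kface t2 ->
  rot a t1 = x :: y :: l1 -> rot b t2 = x :: y :: l2 -> rot a t1 = rot b t2.
Proof.
move=> /KfaceE [c1 [s1 [Hs1 ->]]] /KfaceE [c2 [s2 [Hs2 ->]]].
have s1_gt2 : 2 < size s1 by move/allP: base_faces_size => /(_ _ Hs1).
have s2_gt2 : 2 < size s2 by move/allP: base_faces_size => /(_ _ Hs2).
rewrite -!map_rot.
have [a' Ha' ->] := rot_lt_size a (ltn_trans (isT : 0 < 2) s1_gt2).
have [b' Hb' ->] := rot_lt_size b (ltn_trans (isT : 0 < 2) s2_gt2).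
move/allP: base_dedge_uniqT => /(_ _ Hs1) /allP /(_ _ Hs2).
move=> /allP /(_ a'); rewrite mem_iota => /(_ Ha') /allP.
move=> /(_ b'); rewrite mem_iota => /(_ Hb') /=.
have := size_rot a' s1; have := size_rot b' s2.
case: (rot b' s2) => [|x2 [|y2 m2]] Eb; try by rewrite -Eb in s2_gt2.
case: (rot a' s1) => [|x1 [|y1 m1]] Ea; try by rewrite -Ea in s1_gt2.
rewrite /= => dedge [Ex1 Ey1 _] [Ex2 Ey2 _].
set d := (x1.1 - x2.1)%R in dedge *.
have shift v : tr c2 v = tr c1 (tr d v).
  have c2E : (x1.1 + c1 = x2.1 + c2)%R.
    by rewrite -[LHS]/(tr c1 x1).1 -[RHS]/(tr c2 x2).1 Ex1 Ex2.
  by rewrite trD; congr tr; rewrite /d addrAC c2E (addrC x2.1) addrK.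
have dx2 : tr d x2 = x1 by apply: (@tr_inj c1); rewrite -shift Ex1 Ex2.
have dy2 : tr d y2 = y1 by apply: (@tr_inj c1); rewrite -shift Ey1 Ey2.
move: dedge; rewrite /= dx2 dy2 !take0 eqxx => /eqP [->].
by rewrite -map_comp; congr [:: _, _ & _]; [rewrite Ex1 Ex2 | rewrite Ey1 Ey2 | apply: eq_map].
Qed.

(** * Orientation-preserving maps and their rigidity *)

Lemma orient_pres_eq f g : f =1 g -> K_orient_pres f -> K_orient_pres g.
Proof. by move=> fg Hf s Hs; rewrite -(eq_map fg); apply: Hf. Qed.

Lemma orient_pres_id : K_orient_pres id.
Proof. by move=> s Hs; exists s, 0; rewrite map_id rot0. Qed.

Lemma orient_pres_comp f h : K_orient_pres f -> K_orient_pres h -> K_orient_pres (h \o f).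
Proof.
move=> Hf Hh s Hs; have [t [k [Ht Ef]]] := Hf s Hs.
have [t' [k' [Ht' Et]]] := Hh t Ht; have [n En] := rot_rot_ex t' k k'.
by exists t', n; rewrite map_comp Ef map_rot Et En.
Qed.

Lemma orient_pres_tr d : K_orient_pres (tr d).
Proof. by move=> s Hs; exists (map (tr d) s), 0; rewrite rot0; split; first exact: Kface_tr. Qed.

Definition orient_pres_base (f : V -> V) : bool :=
  all (fun s0 => has (fun t0 => has (fun k =>
     let r := rot k t0 in
     map f s0 == map (tr ((f (head (vxc 0%R 0) s0)).1 - (head (vxc 0%R 0) r).1)%R) r)
  (iota 0 (size t0))) base_faces) base_faces.

Lemma orient_pres_of_base f (lf : cell -> cell) :
  (forall c v, f (tr c v) = tr (lf c) (f v)) -> orient_pres_base f -> K_orient_pres f.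
Proof.
move=> f_tr fB s /KfaceE [c [s0 [Hs0 ->]]].
move/allP: fB => /(_ _ Hs0) /hasP [t0 Ht0 /hasP [k _ /eqP f_s0]].
set d := (_ - _)%R in f_s0.
exists (map (tr (lf c)) (map (tr d) t0)), k.
split; first by do 2 apply: Kface_tr; apply: Kface_base.
by rewrite -!map_rot -f_s0 -!map_comp; apply: eq_map => v /=.
Qed.

(* [rho] is the rotation by 60 degrees about the centre of the hexagon of cell 0;
   [rotc] is its action on the translation lattice. *)
Definition rotc (c : cell) : cell := (- c.2, c.1 + c.2)%R.

Definition rho0 (i : 'I_12) : V :=
  match val i with
  | 0 => vxc 0%R 1 | 1 => vxc 0%R 2 | 2 => vxc 0%R 3 | 3 => vxc 0%R 4
  | 4 => vxc 0%R 5 | 5 => vxc 0%R 0 | 6 => vxc 0%R 8 | 7 => vxc 0%R 9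
  | 8 => vxc 0%R 10 | 9 => vxc 0%R 11 | 10 => vxc (-1, 0)%R 7 | _ => vxc (-1, 0)%R 6 end.

Definition rho (v : V) : V := tr (rotc v.1) (rho0 v.2).

Lemma rotcD : {morph rotc : c d / (c + d)%R}.
Proof. by move=> [a b] [a' b']; rewrite /rotc !cellD /= opprD addrACA. Qed.

Lemma rho_tr c v : rho (tr c v) = tr (rotc c) (rho v).
Proof. by rewrite /rho trD rotcD addrC. Qed.

Lemma iter_rho_tr m c v : iter m rho (tr c v) = tr (iter m rotc c) (iter m rho v).
Proof. by elim: m => //= m IH; rewrite IH rho_tr. Qed.

Lemma orient_pres_rho : K_orient_pres rho.
Proof.
apply: orient_pres_of_base rho_tr _.
by rewrite /orient_pres_base /base_faces /cell_faces /hx /om /op vx_vxc; vm_compute.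
Qed.

Lemma orient_pres_iter_rho m : K_orient_pres (iter m rho).
Proof.
elim: m => [|m IH]; first exact: orient_pres_id.
exact: orient_pres_eq (orient_pres_comp IH orient_pres_rho).
Qed.

Definition motion (e : cell) (m : nat) (v : V) : V := tr e (iter m rho v).

Lemma orient_pres_motion e m : K_orient_pres (motion e m).
Proof. exact: orient_pres_comp (orient_pres_iter_rho m) (orient_pres_tr e). Qed.

Definition Hex (c : cell) : seq V := [seq hx c k | k <- iota 0 6].
Definition Sq (c : cell) (j : nat) : seq V := [:: hx c (j + 5); om c j; op c j; hx c j].

Lemma Kface_Hex c : Kface (Hex c).
Proof. by exists c; rewrite inE eqxx. Qed.

Lemma Kface_Sq c j : j < 6 -> Kface (Sq c j).
Proof. by move=> j_lt6; exists c; rewrite inE !mem_cat map_f ?orbT // mem_iota. Qed.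

Lemma hx_in_Hex c k : hx c k \in Hex c.
Proof.
have -> : hx c k = hx c (k %% 6) by rewrite /hx modn_mod.
by rewrite map_f // mem_iota ltn_pmod.
Qed.

Lemma rot_Hex c j : j < 6 -> exists r l, rot r (Hex c) = hx c (j + 5) :: hx c j :: l.
Proof.
by case: j => [|[|[|[|[|[|]]]]]] // _;
  [exists 5 | exists 0 | exists 1 | exists 2 | exists 3 | exists 4]; eexists.
Qed.

Section Rigidity.

Variables f A : V -> V.
Hypotheses (Hf : K_orient_pres f) (HA : K_orient_pres A).

Lemma agree_face s k u v l : Kface s -> rot k s = u :: v :: l ->
  f u = A u -> f v = A v -> {in s, f =1 A}.
Proof.
move=> Hs sk fu fv.
have [t1 [a [Ht1 E1]]] := Hf Hs; have [t2 [b [Ht2 E2]]] := HA Hs.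
have [a' Ea'] := rot_rot_ex t1 k a; have [b' Eb'] := rot_rot_ex t2 k b.
have R1 : rot a' t1 = f u :: f v :: map f l by rewrite -Ea' -E1 -map_rot sk.
have R2 : rot b' t2 = f u :: f v :: map A l by rewrite -Eb' -E2 -map_rot sk /= fu fv.
have := Kface_dedge_uniq Ht1 Ht2 R1 R2.
by rewrite -Ea' -Eb' -E1 -E2 => /rot_inj /eq_in_map.
Qed.

Lemma agree_Sq c j : {in Hex c, f =1 A} -> j < 6 -> {in Sq c j, f =1 A}.
Proof.
move=> fA_c j_lt6.
apply: (@agree_face _ 3 (hx c j) (hx c (j + 5)) [:: om c j; op c j]) => //.
- exact: Kface_Sq.
- by apply: fA_c; apply: hx_in_Hex.
- by apply: fA_c; apply: hx_in_Hex.
Qed.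

Lemma agree_Hex_across c c' j j' : {in Hex c, f =1 A} -> j < 6 -> j' < 6 ->
  om c' j' = op c j -> op c' j' = om c j -> {in Hex c', f =1 A}.
Proof.
move=> fA_c j_lt6 j'_lt6 om_c' op_c'.
have fA_Sq := agree_Sq fA_c j_lt6.
have fA_Sq' : {in Sq c' j', f =1 A}.
  apply: (@agree_face _ 1 (om c' j') (op c' j') [:: hx c' j'; hx c' (j' + 5)]) => //.
  - exact: Kface_Sq.
  - by rewrite om_c' fA_Sq // !inE eqxx !orbT.
  - by rewrite op_c' fA_Sq // !inE eqxx !orbT.
have [r [l Er]] := rot_Hex c' j'_lt6.
by apply: (agree_face (Kface_Hex c') Er); apply: fA_Sq'; rewrite !inE eqxx ?orbT.
Qed.

Lemma agree_Hex_dir c j : j < 2 ->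
  {in Hex c, f =1 A} <-> {in Hex (c + dir j)%R, f =1 A}.
Proof.
move=> j_lt2.
have [j_lt6 j3_lt6] : j < 6 /\ j + 3 < 6 by case: j j_lt2 => [|[|]].
have [om_shift op_shift] :
    om (c + dir j)%R (j + 3) = op c j /\ op (c + dir j)%R (j + 3) = om c j.
  by case: j j_lt2 {j_lt6 j3_lt6} => [|[|]] //= _; rewrite /om /op /= !csubE !addrK; split.
by split=> fA;
  [apply: (agree_Hex_across fA j_lt6 j3_lt6) | apply: (agree_Hex_across fA j3_lt6 j_lt6)].
Qed.

Lemma agree_Hex_all : {in Hex 0%R, f =1 A} -> forall c, {in Hex c, f =1 A}.
Proof.
have step c j c' : j < 2 -> c' = (c + dir j)%R -> {in Hex c, f =1 A} <-> {in Hex c', f =1 A}.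
  by move=> j_lt2 ->; apply: agree_Hex_dir.
move=> fA0 [x y]; elim/int_rect: y => [|n IH|n IH].
- elim/int_rect: x => [//|n IH|n IH].
    by apply/(step _ 0 _ isT _).1: IH; rewrite cellD /=; congr pair; lia.
  by apply/(step _ 0 _ isT _).2: IH; rewrite cellD /=; congr pair; lia.
- by apply/(step _ 1 _ isT _).1: IH; rewrite cellD /=; congr pair; lia.
by apply/(step _ 1 _ isT _).2: IH; rewrite cellD /=; congr pair; lia.
Qed.

Lemma orient_pres_rigid : {in Hex 0%R, f =1 A} -> f =1 A.
Proof.
move=> fA0 [c i]; have fA_c : {in Hex c, f =1 A} by apply: agree_Hex_all.
rewrite -vxc_val -vx_vxc; case: i => [[|[|[|[|[|[|[|[|[|[|[|[|k]]]]]]]]]]]]] //= _;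
  do [ by rewrite fA_c // /Hex /hx /= !inE eqxx ?orbT
     | by rewrite (agree_Sq fA_c (_ : 0 < 6)) // /Sq /om /op /= !inE eqxx ?orbT
     | by rewrite (agree_Sq fA_c (_ : 1 < 6)) // /Sq /om /op /= !inE eqxx ?orbT
     | by rewrite (agree_Sq fA_c (_ : 2 < 6)) // /Sq /om /op /= !inE eqxx ?orbT ].
Qed.

End Rigidity.

Lemma base_hexagon s : s \in base_faces -> size s = 6 -> s = Hex 0%R.
Proof.
have hexB : all (fun s => (size s == 6) ==> (s == Hex 0%R)) base_faces.
  by rewrite /Hex /base_faces /cell_faces /hx /om /op vx_vxc; vm_compute.
by move=> Hs s6; move/allP: hexB => /(_ _ Hs); rewrite s6 eqxx => /eqP.
Qed.

Lemma iter_rho_Hex m : m < 6 -> map (iter m rho) (Hex 0%R) = rot m (Hex 0%R).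
Proof.
have rotB : all (fun m => map (iter m rho) (Hex 0%R) == rot m (Hex 0%R)) (iota 0 6).
  by rewrite /Hex /hx vx_vxc; vm_compute.
by move=> m_lt6; move/allP: rotB => /(_ m); rewrite mem_iota => /(_ m_lt6) /eqP.
Qed.

Lemma orient_pres_motion_form g : K_orient_pres g ->
  exists e m, m < 6 /\ g =1 (motion e m).
Proof.
move=> Hg; have [t [k [/KfaceE [e [s0 [Hs0 ->]]] gHex]]] := Hg _ (Kface_Hex 0%R).
have s0E : s0 = Hex 0%R.
  apply: base_hexagon => //.
  by move/(congr1 size): gHex; rewrite size_map size_rot size_map.
subst s0; have [m + rot_km] := rot_lt_size k (isT : 0 < size (map (tr e) (Hex 0%R))).
rewrite size_map => m_lt6.
exists e, m; split => //.
apply: orient_pres_rigid Hg (orient_pres_motion e m) _.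
apply/eq_in_map; rewrite gHex rot_km -map_rot -(iter_rho_Hex m_lt6) -map_comp.
exact: eq_map.
Qed.

Lemma motion_moves_vx0 e m : 0 < m < 6 -> motion e m (vx 0%R 0) != vx 0%R 0.
Proof.
have movB : all (fun m => (iter m rho (vxc 0%R 0)).2 != ordc 0) (iota 1 5).
  by vm_compute.
move=> /andP [m_gt0 m_lt6]; move/allP: movB => /(_ m).
rewrite mem_iota m_gt0 /= vx_vxc => /(_ m_lt6) moved.
by apply: contra moved => /eqP /(congr1 snd) /= ->.
Qed.

(** * Gamma consists of translations *)

Definition fixes_face_or_edge (f : V -> V) : Prop :=
  (exists s, Kface s /\ dih_eq (map f s) s) \/
  (exists u v, Kedge u v /\ f u = v /\ f v = u).

Lemma fixes_face_or_edge_conj p f h : (forall v, h (tr p v) = tr p (f v)) ->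
  fixes_face_or_edge f -> fixes_face_or_edge h.
Proof.
move=> hf [[s [Hs [k fs]]] | [u [v [[s [Hs [k [l uv]]]] [fu fv]]]]].
  left; exists (map (tr p) s); split; first exact: Kface_tr.
  have -> : map h (map (tr p) s) = map (tr p) (map f s).
    by rewrite -!map_comp; apply: eq_map => w /=.
  by exists k; case: fs => fs; [left | right; rewrite -map_rev];
    rewrite -(map_rot k (tr p)) -fs.
right; exists (tr p u), (tr p v); split; last by rewrite !hf fu fv.
exists (map (tr p) s); split; first exact: Kface_tr.
by exists k, (map (tr p) l); rewrite -map_rot; case: uv => ->; [left | right].
Qed.

Definition dihb (s t : seq V) : bool :=
  has (fun k => (t == rot k s) || (t == rot k (rev s))) (iota 0 (size s)).

Definition swaps_edge_of (f : V -> V) (s : seq V) : bool :=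
  has (fun k => if rot k s is u :: v :: _ then (f u == v) && (f v == u) else false)
    (iota 0 (size s)).

Definition test_faces : seq (seq V) := base_faces ++ map (map (tr (1, 0)%R)) base_faces.

Definition fixes_face_or_edgeb (f : V -> V) : bool :=
  has (fun s => dihb (map f s) s || swaps_edge_of f s) test_faces.

Lemma Kface_test s : s \in test_faces -> Kface s.
Proof.
rewrite mem_cat => /orP [/Kface_base // | /mapP [s0 /Kface_base Hs0 ->]].
exact: Kface_tr.
Qed.

Lemma fixes_face_or_edgeP f : fixes_face_or_edgeb f -> fixes_face_or_edge f.
Proof.
case/hasP=> s /Kface_test Hs /orP [/hasP [k _ /orP dih] | /hasP [k _]].
  by left; exists s; split => //; exists k; case: dih => /eqP; [left | right].
case Ek: (rot k s) => [|u [|v l]] // /andP [/eqP fu /eqP fv].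
by right; exists u, v; split => //; exists s; split => //; exists k, l; left.
Qed.

(* [1 - rotc^m] has determinant 1, 3, 4, 3, 1 for m = 1, ..., 5, and [small_shifts m]
   lists representatives of the cosets of its image. *)
Definition small_shifts (m : nat) : seq cell :=
  match m with
  | 2 => [:: 0; (1, 0); (2, 0)]
  | 3 => [:: 0; (1, 0); (0, 1); (1, 1)]
  | 4 => [:: 0; (0, 1); (0, 2)]
  | _ => [:: 0]
  end%R.

Lemma small_motion_fixes_face_or_edge m r : 0 < m < 6 -> r \in small_shifts m ->
  fixes_face_or_edge (motion r m).
Proof.
have smallB : all (fun m => all (fun r => fixes_face_or_edgeb (motion r m))
                              (small_shifts m)) (iota 1 5).
  rewrite /fixes_face_or_edgeb /test_faces /base_faces /cell_faces /hx /om /op vx_vxc.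
  by vm_compute.
move=> /andP [m_gt0 m_lt6] r_small; apply: fixes_face_or_edgeP.
by move/allP: smallB => /(_ m); rewrite mem_iota m_gt0 => /(_ m_lt6) /allP /(_ r r_small).
Qed.

Lemma motion_conj_small e m : 0 < m < 6 ->
  exists p r, r \in small_shifts m /\ (iter m rotc p + e = r + p)%R.
Proof.
case: e => e1 e2; case: m => [|[|[|[|[|[|m]]]]]] //= _.
- exists (- e2, e1 + e2)%R, 0%R; split => //.
  by rewrite /rotc !cellD /=; congr pair; lia.
- have [q [r [x_eq r_ge0 r_lt3]]] := divz_spec (e1 - e2) (isT : (0 < 3 :> int)%R).
  exists (q, q + e2)%R, (r, 0)%R; split; last by rewrite /rotc !cellD /=; congr pair; lia.
  by have [->|[->|->]] : r = 0 \/ r = 1 \/ r = 2 by lia.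
- have [q1 [r1 [x_eq x_ge0 x_lt2]]] := divz_spec e1 (isT : (0 < 2 :> int)%R).
  have [q2 [r2 [y_eq y_ge0 y_lt2]]] := divz_spec e2 (isT : (0 < 2 :> int)%R).
  exists (q1, q2), (r1, r2); split; last by rewrite /rotc !cellD /=; congr pair; lia.
  have r1E : r1 = 0 \/ r1 = 1 by lia.
  have r2E : r2 = 0 \/ r2 = 1 by lia.
  by case: r1E r2E => -> [] ->.
- have [q [r [x_eq r_ge0 r_lt3]]] := divz_spec (e2 - e1) (isT : (0 < 3 :> int)%R).
  exists (q + e1, q)%R, (0, r)%R; split; last by rewrite /rotc !cellD /=; congr pair; lia.
  by have [->|[->|->]] : r = 0 \/ r = 1 \/ r = 2 by lia.
- exists (e1 + e2, - e1)%R, 0%R; split => //.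
  by rewrite /rotc !cellD /=; congr pair; lia.
Qed.

Lemma motion_fixes_face_or_edge e m : 0 < m < 6 -> fixes_face_or_edge (motion e m).
Proof.
move=> m_range; have [p [r [r_small conj]]] := motion_conj_small e m_range.
apply: (fixes_face_or_edge_conj (p := p)) (small_motion_fixes_face_or_edge m_range r_small) => v.
by rewrite /motion iter_rho_tr !trD conj.
Qed.

Lemma free_fixes_face_or_edge G g : torus_quotient_group G -> G g ->
  fixes_face_or_edge g -> g =1 id.
Proof.
move=> HG Gg [[s [Hs fs]] | [u [v [uv [gu gv]]]]] w; first exact: (tq_fixF HG Gg Hs fs w).
exact: (tq_fixE HG Gg uv (or_intror (conj gu gv)) w).
Qed.

Lemma Gamma_translation G g : torus_quotient_group G -> G g -> exists e, g =1 tr e.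
Proof.
move=> HG Gg; have [e [[|m] [m_lt6 gE]]] := orient_pres_motion_form (tq_orient HG Gg).
  by exists e.
have m_range : 0 < m.+1 < 6 by [].
have g_id : g =1 id.
  apply: free_fixes_face_or_edge HG Gg _.
  apply: (fixes_face_or_edge_conj (p := 0%R)) (motion_fixes_face_or_edge e m_range) => v.
  by rewrite !tr0 gE.
by have := motion_moves_vx0 e m_range; rewrite -gE g_id eqxx.
Qed.

(** * Symmetries of K descending to X *)

Definition half_turn : V -> V := iter 3 rho.

Lemma half_turn_tr e v : half_turn (tr e v) = tr (- e)%R (half_turn v).
Proof.
rewrite /half_turn iter_rho_tr; congr tr.
by case: e => a b; rewrite /rotc cellN /=; congr pair; lia.
Qed.

Lemma base_vertex (v : V) : v = tr v.1 (vxc 0%R v.2).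
Proof. by case: v => c i; rewrite vxc_val /tr /= add0r. Qed.

Lemma half_turnK : involutive half_turn.
Proof.
have baseK : all (fun i => half_turn (half_turn (vxc 0%R i)) == vxc 0%R i) (iota 0 12).
  by vm_compute.
move=> v; rewrite [v]base_vertex (half_turn_tr v.1) (half_turn_tr (- v.1)%R) opprK.
by move/allP: baseK => /(_ v.2); rewrite mem_iota ltn_ord => /(_ isT) /eqP ->.
Qed.

Lemma orient_pres_half_turn : K_orient_pres half_turn.
Proof. exact: orient_pres_iter_rho. Qed.

Lemma face_pres_orient_pres f : K_orient_pres f -> face_pres Kface f.
Proof.
move=> Hf s Hs; have [t [k [Ht fs]]] := Hf s Hs.
exists t; split => //; exists (size (map f s) - k); left.
by rewrite -/(rotr k (map f s)) fs rotK.
Qed.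

Section Quotient.

Variable G : (V -> V) -> Prop.
Hypothesis HG : torus_quotient_group G.

Lemma Gamma_opp g e : G g -> g =1 tr e -> exists2 h, G h & h =1 tr (- e)%R.
Proof.
move=> Gg gE; have [h [Gh [gK _]]] := tq_inv HG Gg.
have [e' hE] := Gamma_translation HG Gh.
exists h => // v; rewrite hE; congr tr.
have := congr1 fst (gK (vxc 0%R 0)); rewrite gE hE /= add0r.
by move/addr0_eq.
Qed.

Lemma orb_refl v : orb G v v.
Proof. by exists id; split => //; apply: tq_id HG. Qed.

Lemma orb_sym v w : orb G v w -> orb G w v.
Proof. by move=> [g [Gg <-]]; have [h [Gh [gK _]]] := tq_inv HG Gg; exists h. Qed.

Lemma orb_trans u v w : orb G u v -> orb G v w -> orb G u w.
Proof. by move=> [g [Gg <-]] [h [Gh <-]]; exists (h \o g); split => //; apply: tq_comp. Qed.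

Definition normalizing_aut (f : V -> V) : Prop :=
  [/\ K_orient_pres f,
      exists f', [/\ cancel f f', cancel f' f & K_orient_pres f'] &
      forall v w, orb G (f v) (f w) <-> orb G v w].

Lemma normalizing_aut_comp f h :
  normalizing_aut f -> normalizing_aut h -> normalizing_aut (h \o f).
Proof.
move=> [Hf [f' [fK f'K Hf']] f_orb] [Hh [h' [hK h'K Hh']] h_orb].
split; first exact: orient_pres_comp.
  by exists (f' \o h'); split; [exact: can_comp | exact: can_comp | exact: orient_pres_comp].
by move=> v w; split=> [/h_orb/f_orb | /f_orb/h_orb].
Qed.

Lemma normalizing_aut_tr d : normalizing_aut (tr d).
Proof.
split; first exact: orient_pres_tr.
  by exists (tr (- d)%R); split; [exact: trK | exact: trNK | exact: orient_pres_tr].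
move=> v w; split=> [] [g [Gg gvw]]; exists g; split => //;
  have [e gE] := Gamma_translation HG Gg.
  by apply: (@tr_inj d); rewrite -gvw !gE trC.
by rewrite !gE trC -gE gvw.
Qed.

Lemma normalizing_aut_half_turn : normalizing_aut half_turn.
Proof.
split; first exact: orient_pres_half_turn.
  by exists half_turn; split;
    [exact: half_turnK | exact: half_turnK | exact: orient_pres_half_turn].
move=> v w; split=> [] [g [Gg gvw]]; have [e gE] := Gamma_translation HG Gg;
  have [h Gh hE] := Gamma_opp Gg gE; exists h; split => //.
  by rewrite hE -[v]half_turnK -half_turn_tr -gE gvw half_turnK.
by rewrite hE -half_turn_tr -gE gvw.
Qed.

Lemma cls_eq v w : orb G v w -> cls G v = cls G w.
Proof.
move=> vw; have orbE : orb G v = orb G w.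
  apply: FunctionalExtensionality.functional_extensionality => x.
  apply: PropExtensionality.propositional_extensionality.
  by split; [apply: orb_trans (orb_sym vw) | apply: orb_trans vw].
rewrite /cls; move: (ex_intro _ v _) (ex_intro _ w _); rewrite orbE => p1 p2.
by rewrite (ProofIrrelevance.proof_irrelevance _ p1 p2).
Qed.

Lemma cls_orb v w : cls G v = cls G w -> orb G v w.
Proof. by move/(congr1 (@proj1_sig _ _)) => /= ->; apply: orb_refl. Qed.

Lemma cls_surj (x : VX G) : exists v, cls G v = x.
Proof.
case: x => P [v vP]; exists v; rewrite /cls; move: (ex_intro _ v _); rewrite -vP => p.
by rewrite (ProofIrrelevance.proof_irrelevance _ p (ex_intro _ v vP)).
Qed.

Definition rep (x : VX G) : V :=
  proj1_sig (ClassicalEpsilon.constructive_indefinite_description _ (cls_surj x)).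

Lemma cls_rep x : cls G (rep x) = x.
Proof. by rewrite /rep; case: ClassicalEpsilon.constructive_indefinite_description. Qed.

Definition lift (f : V -> V) (x : VX G) : VX G := cls G (f (rep x)).

Lemma lift_cls f v : normalizing_aut f -> lift f (cls G v) = cls G (f v).
Proof. by move=> [_ _ f_orb]; apply/cls_eq/f_orb/cls_orb; rewrite cls_rep. Qed.

Lemma lift_face_pres f : normalizing_aut f -> face_pres (@Xface G) (lift f).
Proof.
move=> Sf t [s [Hs ->]]; have [Hf _ _] := Sf.
have [t' [Ht' st']] := face_pres_orient_pres Hf Hs.
exists (map (cls G) t'); split; first by exists t'.
rewrite -map_comp (eq_map (fun v => lift_cls v Sf)) map_comp.
exact: dih_eq_map.
Qed.

Lemma lift_map_aut f : normalizing_aut f -> is_map_aut (@Xface G) (lift f).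
Proof.
move=> Sf; have [Hf [f' [fK f'K Hf']] f_orb] := Sf.
have Sf' : normalizing_aut f'.
  split=> //; first by exists f; split.
  by move=> v w; split=> [/(f_orb _ _).2 | vw]; rewrite ?f'K //; apply/f_orb; rewrite !f'K.
exists (lift f'); split; [|split; [|split]].
- by move=> x; have [v <-] := cls_surj x; rewrite !lift_cls // fK.
- by move=> x; have [v <-] := cls_surj x; rewrite !lift_cls // f'K.
- exact: lift_face_pres.
- exact: lift_face_pres.
Qed.

End Quotient.

Definition class_reps : seq nat := [:: 0; 1; 2; 6; 8; 10].

Lemma vertex_classes G v : torus_quotient_group G ->
  exists2 j, j \in class_reps & exists2 f, normalizing_aut G f & f (vx 0%R j) = v.
Proof.
have classesB : all (fun i => has (fun j => has (fun d =>
    (tr d (vxc 0%R j) == vxc 0%R i) || (tr d (half_turn (vxc 0%R j)) == vxc 0%R i))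
    [:: 0; (1, 0); (0, 1); (-1, 1)]%R) class_reps) (iota 0 12).
  by vm_compute.
move=> HG; move/allP: classesB => /(_ v.2); rewrite mem_iota ltn_ord => /(_ isT).
case/hasP=> j j_rep /hasP [d _ /orP [] /eqP jv]; exists j => //; rewrite vx_vxc.
  exists (tr (d + v.1)%R); first exact: normalizing_aut_tr.
  by rewrite -trD jv -base_vertex.
exists (tr (d + v.1)%R \o half_turn).
  exact: normalizing_aut_comp (normalizing_aut_half_turn HG) (normalizing_aut_tr HG _).
by rewrite /= -trD jv -base_vertex.
Qed.

Theorem theorem1 (G : (V -> V) -> Prop) (HG : torus_quotient_group G)
  (HX : polyhedral (@Xface G)) :
  exists r : seq (VX G), size r <= 6 /\
    forall x : VX G, exists y, List.In y r /\
      exists phi : VX G -> VX G, is_map_aut (@Xface G) phi /\ phi y = x.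
Proof.
exists [seq cls G (vx 0%R j) | j <- class_reps]; split => // x.
have [v <-] := cls_surj x; have [j j_rep [f Sf fj]] := vertex_classes v HG.
exists (cls G (vx 0%R j)); split; first exact: (In_map_mem (fun i => cls G (vx 0%R i))).
by exists (lift f); split; [apply: lift_map_aut | rewrite lift_cls // fj].
Qed.
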